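(* Let $g\in\mathcal F$, $h\in[H]$, let $P$ be a probability distribution over $\mathcal F$, and let $G$ be the distribution of the function $g\circ_h f$ when $f\sim P$. Suppose that for constants $C_1,C_2,C_3$: (a) for every $f\in\operatorname{supp}(G)$, $\eta(f,g,h)>\eta(g,g,h)-C_1$; (b) $\Big|\mathbb E_{f\sim G}\mathbb E_{x'\sim\mathcal D_{f,h+1}}[V^{\pi_f}_{h+1}(x')]-\mathbb E_{f\sim G}\mathbb E_{x'\sim\mathcal D_{f,h+1}}[f(x',\pi_f(x'))]\Big|\le C_2$; (c) $\Big|\mathbb E_{x'\sim\mathcal D_{g,h+1}}[V^{\pi_g}_{h+1}(x')]-\mathbb E_{x'\sim\mathcal D_{g,h+1}}[g(x',\pi_g(x'))]\Big|\le C_3$. Then $\mathbb E_{f\sim G}[V^{\pi_f}]\ge V^{\pi_g}-(C_1+C_2+C_3)$.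
   Context: Episodic MDP with layered state space $\mathcal X=\mathcal X_1\cup\dots\cup\mathcal X_H$ (disjoint), finite action set $\mathcal A$, transitions $p(\cdot\mid x,a)$ from $\mathcal X_h$ to $\mathcal X_{h+1}$, (expected) reward $r(x,a)$, deterministic initial state $x_1\in\mathcal X_1$. $\mathcal F$ is a finite class of functions $\mathcal X\times\mathcal A\to[0,1]$. For any function $f:\mathcal X\times\mathcal A\to\mathbb R$, $\pi_f(x)=\arg\max_a f(x,a)$; $\mathcal D_{f,h}$ is the distribution of $x_h$ when $\pi_f$ is run from $x_1$; $V^\pi_h(x)$ is the expected reward-to-go from $x\in\mathcal X_h$ under $\pi$ (with $V^\pi_{H+1}\equiv0$ and all functions vanishing at layer $H+1$), and $V^\pi=V^\pi_1(x_1)$. Concatenation: $(f_1\circ_h f_2)(x,a)=f_1(x,a)$ if $x\in\mathcal X_1\cup\dots\cup\mathcal X_{h-1}$ and $=f_2(x,a)$ otherwise. Predicted performance: $\eta(f,g,h)=\mathbb E_{x\sim\mathcal D_{g,h}}\mathbb E_{x'\sim p(\cdot\mid x,\pi_f(x))}[r(x,\pi_f(x))+f(x',\pi_f(x'))]$. *)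

From mathcomp Require Import all_boot all_order all_algebra.
Set Implicit Arguments. Unset Strict Implicit. Unset Printing Implicit Defensive.
Import Order.TTheory GRing.Theory Num.Theory.
Local Open Scope ring_scope.

Section MDP.
Variables (R : realFieldType) (X A : finType).

Definition greedy (a0 : A) (f : X -> A -> R) (x : X) : A :=
  Order.arg_max a0 xpredT (f x).

Definition concat (lay : X -> nat) (f1 : X -> A -> R) (h : nat) (f2 : X -> A -> R)
  : X -> A -> R := fun x a => if (lay x < h)%N then f1 x a else f2 x a.

Fixpoint distk (p : X -> A -> X -> R) (x1 : X) (pi : X -> A) (k : nat) : X -> R :=
  match k with
  | O => fun x => if x == x1 then 1 else 0
  | S k' => fun x' => \sum_x distk p x1 pi k' x * p x (pi x) x'
  end.

Definition Dist p x1 pi (h : nat) : X -> R := distk p x1 pi h.-1.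

Fixpoint Vaux (p : X -> A -> X -> R) (r : X -> A -> R) (pi : X -> A) (n : nat)
  : X -> R :=
  match n with
  | O => fun _ => 0
  | S n' => fun x => r x (pi x) + \sum_x' p x (pi x) x' * Vaux p r pi n' x'
  end.

(* V^pi_h(x) for x in layer h; V^pi_{H+1} = 0 *)
Definition Vh p r (H : nat) pi (h : nat) : X -> R := Vaux p r pi (H.+1 - h).

Definition Value p r H x1 pi : R := Vh p r H pi 1 x1.

Definition Ex (D : X -> R) (phi : X -> R) : R := \sum_x D x * phi x.

Definition eta a0 p r x1 (f g : X -> A -> R) (h : nat) : R :=
  Ex (Dist p x1 (greedy a0 g) h)
     (fun x => r x (greedy a0 f x) +
        \sum_x' p x (greedy a0 f x) x' * f x' (greedy a0 f x')).

End MDP.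

(** Split the value of a policy at layer h: the rewards collected before
    layer h, the reward at layer h, and the value from layer h+1 on.  For
    f = g o_h f', the greedy policy of f agrees with that of g below layer h,
    so both policies reach layer h with the same distribution and collect the
    same rewards before it.  The last two pieces of the split then equal
    eta(f, g, h) up to the error of f as an estimate of the value at layer
    h+1.  Averaging over f, hypothesis (a) compares the eta terms, (b) bounds
    the averaged error, and (c) bounds the error of g.  Everything except
    this averaging is an exact identity. *)

From mathcomp Require Import all_boot all_order all_algebra.
Import Order.TTheory GRing.Theory Num.Theory.
From mathcomp Require Import ring lra zify.
Local Open Scope ring_scope.

Lemma ler_sum_convex (R : realDomainType) (I : finType) (P F : I -> R) (c : R) :
  (forall i, 0 <= P i) -> \sum_i P i = 1 -> (forall i, 0 < P i -> c <= F i) ->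
  c <= \sum_i P i * F i.
Proof.
move=> P_ge0 P_sum1 c_leF; rewrite -[c]mul1r -P_sum1 big_distrl /=.
apply: ler_sum => i _; have [->|P_neq0] := eqVneq (P i) 0; first by rewrite !mul0r.
by rewrite ler_pM2l ?c_leF // lt0r P_neq0 P_ge0.
Qed.

Section Unrolling.
Set Implicit Arguments. Unset Strict Implicit.
Variables (R : realFieldType) (X A : finType).
Variables (p : X -> A -> X -> R) (r : X -> A -> R) (x1 : X).

Definition reward_before (pi : X -> A) (n : nat) : R :=
  \sum_(k < n) Ex (distk p x1 pi k) (fun x => r x (pi x)).

Lemma Ex_distkS (pi : X -> A) k (phi : X -> R) :
  Ex (distk p x1 pi k) (fun x => \sum_x' p x (pi x) x' * phi x') =
  Ex (distk p x1 pi k.+1) phi.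
Proof.
rewrite /Ex /=; under [RHS]eq_bigr do rewrite big_distrl /=.
rewrite exchange_big; apply: eq_bigr => x _; rewrite big_distrr.
by apply: eq_bigr => x' _; rewrite /= mulrA.
Qed.

Lemma Ex_VauxS (pi : X -> A) k n :
  Ex (distk p x1 pi k) (Vaux p r pi n.+1) =
  Ex (distk p x1 pi k) (fun x => r x (pi x)) + Ex (distk p x1 pi k.+1) (Vaux p r pi n).
Proof. by rewrite -Ex_distkS /Ex -big_split; apply: eq_bigr => x _; rewrite mulrDr. Qed.

Lemma Vaux_split (pi : X -> A) m n :
  Vaux p r pi (m + n) x1 = reward_before pi m + Ex (distk p x1 pi m) (Vaux p r pi n).
Proof.
elim: m n => [|m IHm] n.
  rewrite /reward_before big_ord0 add0r /Ex (bigD1 x1) //= eqxx mul1r big1 ?addr0 //.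
  by move=> x /negbTE ->; rewrite mul0r.
by rewrite addSnnS IHm Ex_VauxS /reward_before big_ord_recr addrA.
Qed.

Variables (lay : X -> nat) (H : nat).
Hypothesis lay_x1 : lay x1 = 1%N.
Hypothesis p_layered :
  forall x a x', (lay x <= H)%N -> p x a x' != 0 -> lay x' = (lay x).+1.

Lemma Value_split (pi : X -> A) h : (1 <= h <= H)%N ->
  Value p r H x1 pi = reward_before pi h.-1 + Ex (Dist p x1 pi h) (fun x => r x (pi x))
                      + Ex (Dist p x1 pi h.+1) (Vh p r H pi h.+1).
Proof.
case: h => [//|h] /andP[_ le_hH].
rewrite /Value /Vh subSS subn0 -{1}(subnKC le_hH) Vaux_split /reward_before.
by rewrite big_ord_recr.
Qed.

Lemma distk_support (pi : X -> A) k x :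
  distk p x1 pi k x != 0 -> (k <= H)%N -> lay x = k.+1.
Proof.
elim: k x => [|k IHk] x' /=.
  by case: (x' =P x1) => [-> //|_]; rewrite eqxx.
move=> sum_neq0 lt_kH.
have [y]: exists y, distk p x1 pi k y * p y (pi y) x' != 0.
  apply/existsP; apply: contraNT sum_neq0 => /existsPn all0.
  by apply/eqP/big1 => y _; apply/eqP/negbNE.
rewrite mulf_eq0 => /norP[/IHk lay_y p_neq0].
by rewrite (p_layered _ p_neq0) lay_y // ltnW.
Qed.

Section Agreement.
Variables (pi pi' : X -> A) (h : nat).
Hypothesis le_hH : (h <= H)%N.
Hypothesis pi_agree : forall x, (lay x < h)%N -> pi x = pi' x.

Lemma distk_agree k x : (k < h)%N -> distk p x1 pi k x = distk p x1 pi' k x.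
Proof.
elim: k x => [|k IHk] x' lt_kh //=.
apply: eq_bigr => x _; rewrite IHk; last by lia.
have [->|neq0] := eqVneq (distk p x1 pi' k x) 0; first by rewrite !mul0r.
by rewrite pi_agree // (distk_support neq0); lia.
Qed.

Lemma reward_before_agree : reward_before pi h.-1 = reward_before pi' h.-1.
Proof.
apply: eq_bigr => -[k /= lt_kh] _; rewrite /Ex; apply: eq_bigr => x _.
rewrite distk_agree; last by lia.
have [->|neq0] := eqVneq (distk p x1 pi' k x) 0; first by rewrite !mul0r.
by rewrite pi_agree // (distk_support neq0); lia.
Qed.

End Agreement.

Section GreedyAgreement.
Variables (a0 : A) (f g : X -> A -> R) (h : nat).
Hypothesis h_range : (1 <= h <= H)%N.
Hypothesis greedy_agree : forall x, (lay x < h)%N -> greedy a0 f x = greedy a0 g x.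

Lemma eta_split :
  eta a0 p r x1 f g h = Ex (Dist p x1 (greedy a0 f) h) (fun x => r x (greedy a0 f x))
    + Ex (Dist p x1 (greedy a0 f) h.+1) (fun x' => f x' (greedy a0 f x')).
Proof.
move: h_range greedy_agree; case: h => [//|h'] /andP[_ le_hH] f_agree.
rewrite /eta /Dist /= -Ex_distkS /Ex -big_split; apply: eq_bigr => x _ /=.
by rewrite -(distk_agree le_hH f_agree) // mulrDr.
Qed.

Lemma Value_eta_split :
  Value p r H x1 (greedy a0 f) =
    reward_before (greedy a0 g) h.-1 + eta a0 p r x1 f g h
    + (Ex (Dist p x1 (greedy a0 f) h.+1) (Vh p r H (greedy a0 f) h.+1)
       - Ex (Dist p x1 (greedy a0 f) h.+1) (fun x' => f x' (greedy a0 f x'))).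
Proof.
have /andP[_ le_hH] := h_range.
rewrite (Value_split _ h_range) eta_split (reward_before_agree le_hH greedy_agree).
by ring.
Qed.

End GreedyAgreement.

End Unrolling.

Theorem lemma12 (R : realFieldType) (X A I : finType) (a0 : A) (H : nat)
  (lay : X -> nat) (p : X -> A -> X -> R) (r : X -> A -> R) (x1 : X)
  (fam : I -> X -> A -> R) (ig : I) (h : nat) (P : I -> R) (C1 C2 C3 : R)
  (* layered structure: layers 1..H+1, layer H+1 terminal *)
  (Hlay : forall x, (1 <= lay x <= H.+1)%N)
  (Hx1 : lay x1 = 1%N)
  (Hp0 : forall x a x', 0 <= p x a x')
  (Hp1 : forall x a, \sum_x' p x a x' = 1)
  (Hplay : forall x a x', (lay x <= H)%N -> p x a x' != 0 -> lay x' = (lay x).+1)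
  (* F is a finite class of [0,1]-valued functions vanishing at layer H+1 *)
  (HF01 : forall i x a, 0 <= fam i x a <= 1)
  (HFH1 : forall i x a, lay x = H.+1 -> fam i x a = 0)
  (Hh : (1 <= h <= H)%N)
  (HP0 : forall i, 0 <= P i) (HP1 : \sum_i P i = 1) :
  let g := fam ig in
  let pi := greedy a0 in
  let EG (phi : (X -> A -> R) -> R) := \sum_i P i * phi (concat lay g h (fam i)) in
  (forall i, 0 < P i ->
     eta a0 p r x1 (concat lay g h (fam i)) g h > eta a0 p r x1 g g h - C1) ->
  `| EG (fun f => Ex (Dist p x1 (pi f) h.+1) (Vh p r H (pi f) h.+1))
     - EG (fun f => Ex (Dist p x1 (pi f) h.+1) (fun x' => f x' (pi f x'))) | <= C2 ->
  `| Ex (Dist p x1 (pi g) h.+1) (Vh p r H (pi g) h.+1)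
     - Ex (Dist p x1 (pi g) h.+1) (fun x' => g x' (pi g x')) | <= C3 ->
  EG (fun f => Value p r H x1 (pi f)) >= Value p r H x1 (pi g) - (C1 + C2 + C3).
Proof.
move=> g pi EG adv err_avg err_g.
have agree i x : (lay x < h)%N -> pi (concat lay g h (fam i)) x = pi g x.
  by move=> lt_xh; rewrite /pi /greedy /concat lt_xh.
have eta_avg : eta a0 p r x1 g g h - C1 <= EG (fun f => eta a0 p r x1 f g h).
  by apply: ler_sum_convex => // i /adv /ltW.
have Value_avg : EG (fun f => Value p r H x1 (pi f)) =
    reward_before p r x1 (pi g) h.-1 + EG (fun f => eta a0 p r x1 f g h)
    + (EG (fun f => Ex (Dist p x1 (pi f) h.+1) (Vh p r H (pi f) h.+1))
       - EG (fun f => Ex (Dist p x1 (pi f) h.+1) (fun x' => f x' (pi f x')))).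
  rewrite /EG -sumrB -[reward_before _ _ _ _ _]mul1r -HP1 big_distrl -!big_split /=.
  apply: eq_bigr => i _.
  rewrite (Value_eta_split r Hx1 Hplay Hh (agree i)); ring.
rewrite Value_avg (Value_eta_split r Hx1 Hplay Hh (fun x _ => erefl)).
move: err_avg err_g => /ler_normlP[? ?] /ler_normlP[? ?]; lra.
Qed.
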